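(* Let $\langle D,\Gamma,\Delta\rangle$ be a planning problem with $(D,\Gamma)$ consistent and deterministic (i.e. $|\Phi(a,s)|\le 1$ for every action $a$ and state $s$) and $\Delta=p_1\wedge\dots\wedge p_k$ a conjunction of fluent literals, and let $n\ge0$. Then: (1) for each plan $a_0,\dots,a_{n-1}$ achieving $\Delta$ from $\Gamma$ there exists an answer set $M$ of $\Pi_n$ with $occ(a_i,i)\in M$ for all $i\in\{0,\dots,n-1\}$; (2) for each answer set $M$ of $\Pi_n$ there exists an integer $0\le k\le n$ such that, with $a_i$ the (unique) actions with $occ(a_i,i)\in M$ for $0\le i<k$, the sequence $a_0,\dots,a_{k-1}$ is a plan achieving $\Delta$ from $\Gamma$, and if $k<n$ then no action is executable in the state reached by executing $a_0,\dots,a_{k-1}$ in $s_0^\Gamma$.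
   Context: Action language $\mathcal{B}$: fix finite sets $\mathbf{F}$ of fluents and $\mathbf{A}$ of actions. A fluent literal is $f$ or $\neg f$ ($f\in\mathbf{F}$); the complement $\bar l$ of $f$ is $\neg f$ and of $\neg f$ is $f$. A set of fluent literals is consistent if it contains no pair $f,\neg f$; an interpretation is a maximal consistent set. For a set $u$ of literals, $u\models p_1\wedge\dots\wedge p_k$ means $\{p_1,\dots,p_k\}\subseteq u$. A domain description $D$ is a finite set of static causal laws $\mathbf{caused}(\{p_1,\dots,p_k\},f)$ (their set is $D_C$), dynamic causal laws $\mathbf{causes}(a,f,\{p_1,\dots,p_k\})$ and executability conditions $\mathbf{executable}(a,\{p_1,\dots,p_k\})$, with $a\in\mathbf{A}$ and $f,p_i$ fluent literals; $\Gamma$ is a set of propositions $\mathbf{initially}(f)$. A consistent set $u$ is closed under $D_C$ if for every $\mathbf{caused}(P,f)\in D_C$ with $P\subseteq u$, $f\in u$; $Cl_{D_C}(u)$ is the least consistent superset of $u$ closed under $D_C$ (undefined if none). A state is an interpretation closed under $D_C$. Action $a$ is executable in state $s$ if some $\mathbf{executable}(a,P)\in D$ has $P\subseteq s$. $E(a,s)=\{f\mid \mathbf{causes}(a,f,P)\in D,\ P\subseteq s\}$. $\Phi(a,s)=\{s'\mid s'\text{ a state},\ s'=Cl_{D_C}(E(a,s)\cup(s\cap s'))\}$ if $a$ is executable in $s$, and $\Phi(a,s)=\emptyset$ otherwise. A trajectory is a sequence $s_0a_0s_1\dots a_{m-1}s_m$ of states $s_i$ and actions $a_i$ with $s_{i+1}\in\Phi(a_i,s_i)$.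 $D$ is consistent if $\Phi(a,s)\ne\emptyset$ whenever $a$ is executable in state $s$; $(D,\Gamma)$ is consistent if $D$ is consistent and $s_0^\Gamma:=\{f\mid\mathbf{initially}(f)\in\Gamma\}$ is a state of $D$. A sequence of actions $a_0,\dots,a_{m-1}$ is a plan achieving $\Delta$ from $\Gamma$ (in the deterministic case) if there is a trajectory $s_0a_0s_1\dots a_{m-1}s_m$ with $s_0=s_0^\Gamma$ and $s_m\models\Delta$. Answer sets: a ground normal program consists of rules $h\leftarrow b_1,\dots,b_m,\mathit{not}\,c_1,\dots,\mathit{not}\,c_r$ and constraints $\bot\leftarrow b_1,\dots,b_m,\mathit{not}\,c_1,\dots,\mathit{not}\,c_r$. For a set $S$ of atoms, the reduct $\Pi^S$ deletes every rule/constraint containing $\mathit{not}\,c$ with $c\in S$ and deletes all $\mathit{not}$-literals from the rest; $S$ is an answer set of $\Pi$ if $S$ is the least set of atoms closed under the non-constraint rules of $\Pi^S$ and no constraint of $\Pi^S$ has its whole body contained in $S$. The program $\pi$ (ground; $t$ ranges over $\{0,\dots,n\}$ unless stated): (1) $holds(l,0)\leftarrow$ for each $\mathbf{initially}(l)\in\Gamma$; (2) $possible(a,t)\leftarrow holds(p_1,t),\dots,holds(p_k,t)$ for each $\mathbf{executable}(a,\{p_1,\dots,p_k\})\in D$; (3) for $t\in\{0,\dots,n-1\}$, $holds(f,t+1)\leftarrow occ(a,t),possible(a,t),holds(p_1,t),\dots,holds(p_k,t)$ for each $\mathbf{causes}(a,f,\{p_1,\dots,p_k\})\in D$; (4) $holds(f,t)\leftarrow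 holds(p_1,t),\dots,holds(p_k,t)$ for each $\mathbf{caused}(\{p_1,\dots,p_k\},f)\in D$; (5) $occ(a,t)\leftarrow possible(a,t),\mathit{not}\,nocc(a,t)$ for each action $a$; (6) $nocc(a,t)\leftarrow occ(b,t)$ for each pair of distinct actions $a\ne b$; (7) for $t\in\{0,\dots,n-1\}$, $holds(l,t+1)\leftarrow holds(l,t),\mathit{not}\,holds(\bar l,t+1)$ for each fluent literal $l$; (8) $\bot\leftarrow holds(f,t),holds(\neg f,t)$ for each fluent $f$. $\Pi_n$ is $\pi$ together with the rule $goal\leftarrow holds(p_1,n),\dots,holds(p_k,n)$ (where $\Delta=p_1\wedge\dots\wedge p_k$) and the constraint $\bot\leftarrow\mathit{not}\,goal$. For a set $M$ of atoms, $s_i(M)=\{l\mid l\text{ a fluent literal},\ holds(l,i)\in M\}$. *)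

From Stdlib Require List.
From mathcomp Require Import all_boot.

Set Implicit Arguments.
Unset Strict Implicit.
Unset Printing Implicit Defensive.

(* A fluent literal over fluents F: (f, true) is f, (f, false) is ~f. *)
Notation lit F := (F * bool)%type.

Definition compl {F : Type} (l : lit F) : lit F := (l.1, ~~ l.2).

(* Domain description: static causal laws caused(P, f), dynamic causal laws
   causes(a, f, P), executability conditions executable(a, P). *)
Record domain (F A : finType) := Domain {
  static_laws : seq (seq (lit F) * lit F);
  dynamic_laws : seq (A * lit F * seq (lit F));
  exec_conds : seq (A * seq (lit F)) }.

Section ActionLanguage.
Variables (F A : finType) (D : domain F A).

Definition consistent (u : {set lit F}) : Prop :=
  forall f : F, ~ ((f, true) \in u /\ (f, false) \in u).

Definition interpretation (u : {set lit F}) : Prop :=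
  consistent u /\ forall v : {set lit F}, consistent v -> u \subset v -> v = u.

Definition closed_DC (u : {set lit F}) : Prop :=
  forall (P : seq (lit F)) (f : lit F),
    (P, f) \in static_laws D -> {subset P <= u} -> f \in u.

(* is_Cl u v  <->  Cl_{D_C}(u) is defined and equals v *)
Definition is_Cl (u v : {set lit F}) : Prop :=
  [/\ consistent v, u \subset v, closed_DC v &
      forall w : {set lit F}, consistent w -> u \subset w -> closed_DC w -> v \subset w].

Definition state (s : {set lit F}) : Prop := interpretation s /\ closed_DC s.

Definition executable (a : A) (s : {set lit F}) : Prop :=
  exists P : seq (lit F), (a, P) \in exec_conds D /\ {subset P <= s}.

Definition E (a : A) (s : {set lit F}) : {set lit F} :=
  [set f | has (fun d : A * lit F * seq (lit F) =>
                  [&& d.1.1 == a, d.1.2 == f & all (fun p => p \in s) d.2])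
               (dynamic_laws D)].

Definition Phi (a : A) (s s' : {set lit F}) : Prop :=
  executable a s /\ state s' /\ is_Cl (E a s :|: (s :&: s')) s'.

Definition D_consistent : Prop :=
  forall (a : A) (s : {set lit F}), state s -> executable a s -> exists s', Phi a s s'.

Definition deterministic : Prop :=
  forall (a : A) (s s1 s2 : {set lit F}), state s -> Phi a s s1 -> Phi a s s2 -> s1 = s2.

(* Gamma is given as the set s_0^Gamma = {f | initially(f) in Gamma} *)
Definition problem_consistent (Gamma : {set lit F}) : Prop :=
  D_consistent /\ state Gamma.

Definition models (s : {set lit F}) (Delta : seq (lit F)) : Prop :=
  {subset Delta <= s}.

Fixpoint reach (s : {set lit F}) (acts : seq A) (s' : {set lit F}) : Prop :=
  match acts with
  | [::] => s' = s
  | a :: r => exists s1, Phi a s s1 /\ reach s1 r s'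
  end.

Definition trajectory_from (s : {set lit F}) (acts : seq A) (s' : {set lit F}) : Prop :=
  state s /\ reach s acts s'.

Definition is_plan (Gamma : {set lit F}) (Delta : seq (lit F)) (acts : seq A) : Prop :=
  exists s', trajectory_from Gamma acts s' /\ models s' Delta.

End ActionLanguage.

Inductive atom (F A : Type) : Type :=
| Holds of lit F & nat
| Possible of A & nat
| Occ of A & nat
| Nocc of A & nat
| Goal.
Arguments Goal {F A}.

(* rule (head, positive body, negative body); head None = constraint *)
Definition rule (X : Type) := (option X * seq X * seq X)%type.
Definition program (X : Type) := seq (rule X).

Section AnswerSets.
Variable X : Type.

(* r belongs to the reduct Pi^S (with its not-literals removed) *)
Definition in_reduct (P : program X) (S : X -> Prop) (r : rule X) : Prop :=
  List.In r P /\ forall c, List.In c r.2 -> ~ S c.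

Definition closed_reduct (P : program X) (S T : X -> Prop) : Prop :=
  forall (h : X) (pos neg : seq X),
    in_reduct P S (Some h, pos, neg) -> (forall b, List.In b pos -> T b) -> T h.

Definition answer_set (P : program X) (S : X -> Prop) : Prop :=
  [/\ closed_reduct P S S,
      (forall T, closed_reduct P S T -> forall x, S x -> T x) &
      (forall pos neg : seq X, in_reduct P S (None, pos, neg) ->
         ~ (forall b, List.In b pos -> S b))].

End AnswerSets.

Section Program.
Variables (F A : finType) (D : domain F A).
Implicit Types (Gamma : {set lit F}) (Delta : seq (lit F)) (n : nat).

Definition hs (t : nat) (P : seq (lit F)) : seq (atom F A) :=
  [seq Holds A p t | p <- P].

Definition pi_prog Gamma n : program (atom F A) :=
  (* (1) *)
  [seq (Some (Holds A l 0), [::], [::]) | l <- enum Gamma] ++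
  (* (2) *)
  [seq (Some (Possible F e.1 t), hs t e.2, [::]) | t <- iota 0 n.+1, e <- exec_conds D] ++
  (* (3) *)
  [seq (Some (Holds A d.1.2 t.+1), Occ F d.1.1 t :: Possible F d.1.1 t :: hs t d.2, [::])
     | t <- iota 0 n, d <- dynamic_laws D] ++
  (* (4) *)
  [seq (Some (Holds A c.2 t), hs t c.1, [::]) | t <- iota 0 n.+1, c <- static_laws D] ++
  (* (5) *)
  [seq (Some (Occ F a t), [:: Possible F a t], [:: Nocc F a t]) | t <- iota 0 n.+1, a <- enum A] ++
  (* (6) *)
  [seq (Some (Nocc F ab.1 t), [:: Occ F ab.2 t], [::])
     | t <- iota 0 n.+1, ab <- [seq ab <- enum {: A * A} | ab.1 != ab.2]] ++
  (* (7) *)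
  [seq (Some (Holds A l t.+1), [:: Holds A l t], [:: Holds A (compl l) t.+1])
     | t <- iota 0 n, l <- enum {: lit F}] ++
  (* (8) *)
  [seq (None, [:: Holds A (f, true) t; Holds A (f, false) t], [::])
     | t <- iota 0 n.+1, f <- enum F].

Definition Pi_n Gamma Delta n : program (atom F A) :=
  pi_prog Gamma n ++
  [:: (Some Goal, hs n Delta, [::]); (None, [::], [:: Goal])].

End Program.

(* For an answer set M of Pi_n, the literals holding at time t form a state
   s_t: rule (8) makes it consistent, rule (4) closes it under the static
   laws, and inertia (7) makes it complete. Minimality of M then says that
   whenever some occ(a, t) is in M the step s_t -> s_(t+1) is exactly a
   transition of Phi(a, s_t), while at a time without any occurrence nothing
   is executable (rule (5)) and inertia copies s_t unchanged; the goal
   constraint puts Delta into s_n.  Conversely, a plan yields a trajectory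
   (unique by determinism), and reading off holds/possible/occ from it gives
   a model of the reduct; it is the least one because each state of the
   trajectory is the least closed set containing the effects and the
   inertial literals. *)

From mathcomp Require Import all_boot boolp.

Set Implicit Arguments.
Unset Strict Implicit.
Unset Printing Implicit Defensive.

Section AnswerSets.
Variables (X : Type) (P : program X) (M : X -> Prop).
Hypothesis HM : answer_set P M.

Lemma answer_set_unfounded (R : X -> Prop) :
  (forall h pos neg, in_reduct P M (Some h, pos, neg) ->
     (forall b, List.In b pos -> M b /\ ~ R b) -> ~ R h) ->
  forall x, M x -> ~ R x.
Proof.
case: HM => Mcl Mmin _ HR x Mx.
have [] // := Mmin (fun y => M y /\ ~ R y) _ x Mx.
move=> h pos neg Hr Hb; split; first by apply: (Mcl _ _ _ Hr) => b /Hb [].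
exact: (HR _ _ _ Hr Hb).
Qed.

Lemma answer_set_supported x : M x ->
  exists pos neg, in_reduct P M (Some x, pos, neg) /\ forall b, List.In b pos -> M b.
Proof.
move=> Mx; apply: contrapT => Nsupp.
apply: (answer_set_unfounded (R := eq^~ x) _ Mx erefl) => h pos neg Hr Hb Eh.
by apply: Nsupp; exists pos, neg; rewrite -Eh; split=> // b /Hb [].
Qed.

End AnswerSets.

Lemma In_mem (T : eqType) (x : T) (s : seq T) : List.In x s <-> x \in s.
Proof.
elim: s => [|y s IH] //=; rewrite in_cons; split.
- by case=> [->|/IH ->]; rewrite ?eqxx ?orbT.
- by case/orP=> [/eqP ->|/IH]; auto.
Qed.

Lemma In_allpairs (T U : eqType) (V : Type) (f : T -> U -> V) s1 s2 x :
  List.In x [seq f t e | t <- s1, e <- s2] <->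
  exists t e, [/\ t \in s1, e \in s2 & x = f t e].
Proof.
elim: s1 => [|t s1 IH] /=; first by split=> // -[? [? []]].
rewrite List.in_app_iff IH List.in_map_iff; split.
- case=> [[e [<- /In_mem He]]|[t' [e [Ht' He ->]]]].
    by exists t, e; rewrite mem_head.
  by exists t', e; rewrite in_cons Ht' orbT.
- case=> t' [e [+ He ->]]; rewrite in_cons => /orP [/eqP ->|Ht'].
    by left; exists e; rewrite In_mem.
  by right; exists t', e.
Qed.

Section LiteralSets.
Variable F : finType.
Implicit Types (u : {set lit F}) (l : lit F).

Definition complete u := forall f : F, (f, true) \in u \/ (f, false) \in u.

Lemma interpretationP u : interpretation u <-> consistent u /\ complete u.
Proof.
split=> [[Hc Hmax]|[Hc Hu]].
  split=> // f; apply: contrapT => Nf.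
  have Hfu : (f, true) |: u = u.
    apply: Hmax; last exact: subsetUr.
    move=> g; rewrite !in_setU1 /= => -[/orP [/eqP [->]|Hgt] /orP [/eqP //|Hgf]].
      by apply: Nf; right.
    exact: (Hc g).
  by apply: Nf; left; rewrite -Hfu setU11.
split=> // v Hv Huv; apply/eqP; rewrite eqEsubset Huv andbT.
apply/subsetP => -[f b] Hfb; have [Ht|Hf] := Hu f.
- by case: b Hfb => // Hfb; case: (Hv f); split=> //; apply: (subsetP Huv).
- by case: b Hfb => // Hfb; case: (Hv f); split=> //; apply: (subsetP Huv).
Qed.

Lemma complete_compl u l : complete u -> l \in u \/ compl l \in u.
Proof. by case: l => f [] /(_ f) /= [H|H]; auto. Qed.

Lemma consistent_compl u l : consistent u -> l \in u -> compl l \in u -> False.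
Proof. by case: l => f [] Hc H1 H2; apply: (Hc f). Qed.

End LiteralSets.

Section Trajectories.
Variables (F A : finType) (D : domain F A).

Lemma reach_cat s l1 l2 s' :
  reach D s (l1 ++ l2) s' <-> exists2 m, reach D s l1 m & reach D m l2 s'.
Proof.
elim: l1 s => [|a l1 IH] s /=; first by split; [exists s | case=> m ->].
split.
- by case=> s1 [HP /IH [m H1 H2]]; exists m => //; exists s1.
- by case=> m [s1 [HP H1]] H2; exists s1; split=> //; apply/IH; exists m.
Qed.

Lemma reach_rcons s l a s' :
  reach D s (rcons l a) s' <-> exists2 m, reach D s l m & Phi D a m s'.
Proof.
rewrite -cats1 reach_cat; split; first by case=> m Hm [s1 [HP ->]]; exists m.
by case=> m Hm HP; exists m => //; exists s'.
Qed.

Lemma reach_state l s s' : state D s -> reach D s l s' -> state D s'.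
Proof.
elim: l s => [|a l IH] s /= Hs; first by move=> ->.
by case=> s1 [[_ [Hs1 _]]]; apply: IH.
Qed.

Lemma reach_det l s s1 s2 :
  deterministic D -> state D s -> reach D s l s1 -> reach D s l s2 -> s1 = s2.
Proof.
move=> Hdet; elim: l s => [|a l IH] s /= Hs; first by move=> -> ->.
case=> m1 [HP1 H1] [m2 [HP2 H2]]; have Em := Hdet _ _ _ _ Hs HP1 HP2; subst m2.
by apply: (IH m1 _ H1 H2); case: HP1 => _ [].
Qed.

End Trajectories.

Section Program.
Variables (F A : finType) (D : domain F A) (Gamma : {set lit F}) (Delta : seq (lit F)).
Variable n : nat.
Local Notation Pi := (Pi_n D Gamma Delta n).

Inductive Pi_rule : rule (atom F A) -> Prop :=
| Rule_init l : l \in Gamma -> Pi_rule (Some (Holds A l 0), [::], [::])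
| Rule_possible t a P : t <= n -> (a, P) \in exec_conds D ->
    Pi_rule (Some (Possible F a t), hs A t P, [::])
| Rule_effect t a l P : t < n -> (a, l, P) \in dynamic_laws D ->
    Pi_rule (Some (Holds A l t.+1), Occ F a t :: Possible F a t :: hs A t P, [::])
| Rule_static t P l : t <= n -> (P, l) \in static_laws D ->
    Pi_rule (Some (Holds A l t), hs A t P, [::])
| Rule_occ t a : t <= n -> Pi_rule (Some (Occ F a t), [:: Possible F a t], [:: Nocc F a t])
| Rule_nocc t a b : t <= n -> a != b -> Pi_rule (Some (Nocc F a t), [:: Occ F b t], [::])
| Rule_inertia t l : t < n ->
    Pi_rule (Some (Holds A l t.+1), [:: Holds A l t], [:: Holds A (compl l) t.+1])
| Rule_consistency t f : t <= n ->
    Pi_rule (None, [:: Holds A (f, true) t; Holds A (f, false) t], [::])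
| Rule_goal : Pi_rule (Some Goal, hs A n Delta, [::])
| Rule_goal_constraint : Pi_rule (None, [::], [:: Goal]).

Lemma In_hs (b : atom F A) t (P : seq (lit F)) :
  List.In b (hs A t P) <-> exists2 p, p \in P & b = Holds A p t.
Proof.
rewrite List.in_map_iff; split; first by case=> p [<- /In_mem]; exists p.
by case=> p /In_mem Hp ->; exists p.
Qed.

Lemma Pi_rule_In r : List.In r Pi -> Pi_rule r.
Proof.
have lt_iota k t : t \in iota 0 k -> t < k by rewrite mem_iota.
rewrite /Pi_n /pi_prog.
move: (iota 0 n.+1) (iota 0 n) (lt_iota n.+1) (lt_iota n) => I1 I0 HI1 HI0.
rewrite !List.in_app_iff !In_allpairs List.in_map_iff.
case=> [|[<-|[<-|[]]]]; [|exact: Rule_goal|exact: Rule_goal_constraint].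
case=> [[l [<-]]|]; first by rewrite In_mem mem_enum; apply: Rule_init.
case=> [[t [[a P] [/HI1 Ht He ->]]]|]; first exact: Rule_possible.
case=> [[t [[[a l] P] [/HI0 Ht Hd ->]]]|]; first exact: Rule_effect.
case=> [[t [[P l] [/HI1 Ht Hc ->]]]|]; first exact: Rule_static.
case=> [[t [a [/HI1 Ht _ ->]]]|]; first exact: Rule_occ.
case=> [[t [[a b] [/HI1 Ht]]]|].
  by rewrite mem_filter /= => /andP [Hab _] ->; apply: Rule_nocc.
case=> [[t [l [/HI0 Ht _ ->]]]|]; first exact: Rule_inertia.
by case=> t [f [/HI1 Ht _ ->]]; apply: Rule_consistency.
Qed.

Lemma In_Pi_rule r : Pi_rule r -> List.In r Pi.
Proof.
have in_iota k t : t < k -> t \in iota 0 k by rewrite mem_iota.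
rewrite /Pi_n /pi_prog.
move: (iota 0 n.+1) (iota 0 n) (in_iota n.+1) (in_iota n) => I1 I0 HI1 HI0.
rewrite !List.in_app_iff !In_allpairs List.in_map_iff.
case=> [l Hl|t a P Ht He|t a l P Ht Hd|t P l Ht Hc|t a Ht|t a b Ht Hab|t l Ht|t f Ht||].
- by left; left; exists l; rewrite In_mem mem_enum.
- by left; right; left; exists t, (a, P); rewrite HI1.
- by left; do 2 right; left; exists t, (a, l, P); rewrite HI0.
- by left; do 3 right; left; exists t, (P, l); rewrite HI1.
- by left; do 4 right; left; exists t, a; rewrite HI1 ?mem_enum.
- by left; do 5 right; left; exists t, (a, b); rewrite HI1 // mem_filter mem_enum andbT.
- by left; do 6 right; left; exists t, l; rewrite HI0 ?mem_enum.
- by left; do 7 right; exists t, f; rewrite HI1 ?mem_enum.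
- by right; left.
- by right; right; left.
Qed.

Section ReductClosure.
Variables M T : atom F A -> Prop.
Hypothesis HT : closed_reduct Pi M T.

Lemma closed_pos_rule h pos :
  Pi_rule (Some h, pos, [::]) -> (forall b, List.In b pos -> T b) -> T h.
Proof. by move=> Hr; apply: (HT (neg := [::])); split=> //; apply: In_Pi_rule. Qed.

Lemma closed_neg_rule h pos c :
  Pi_rule (Some h, pos, [:: c]) -> ~ M c -> (forall b, List.In b pos -> T b) -> T h.
Proof.
move=> Hr Nc; apply: (HT (neg := [:: c])); split; first exact: In_Pi_rule.
by move=> c' [<-|].
Qed.

Lemma hs_closed t P :
  (forall p, p \in P -> T (Holds A p t)) -> forall b, List.In b (hs A t P) -> T b.
Proof. by move=> HP b /In_hs [p /HP Hp ->]. Qed.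

Lemma closed_init l : l \in Gamma -> T (Holds A l 0).
Proof. by move=> Hl; apply: (closed_pos_rule (Rule_init Hl)). Qed.

Lemma closed_possible t a s : t <= n -> executable D a s ->
  (forall l, l \in s -> T (Holds A l t)) -> T (Possible F a t).
Proof.
move=> Ht [P [HP Hsub]] Hs; apply: (closed_pos_rule (Rule_possible Ht HP)).
by apply: hs_closed => p /Hsub /Hs.
Qed.

Lemma closed_effect t a l s : t < n -> l \in E D a s ->
  T (Occ F a t) -> T (Possible F a t) -> (forall p, p \in s -> T (Holds A p t)) ->
  T (Holds A l t.+1).
Proof.
move=> Ht; rewrite inE => /hasP [[[a' l'] P] Hd /and3P [/eqP /= Ea /eqP /= El /allP HP]].
subst a' l' => Ho Hp Hs; apply: (closed_pos_rule (Rule_effect Ht Hd)).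
by move=> b [<-|[<-|]] //; apply: hs_closed => p /HP /Hs.
Qed.

Lemma closed_static t P l : t <= n -> (P, l) \in static_laws D ->
  (forall p, p \in P -> T (Holds A p t)) -> T (Holds A l t).
Proof. by move=> Ht Hc HP; apply: (closed_pos_rule (Rule_static Ht Hc) (hs_closed HP)). Qed.

Lemma closed_occ t a : t <= n -> ~ M (Nocc F a t) -> T (Possible F a t) -> T (Occ F a t).
Proof. by move=> Ht Nn Hp; apply: (closed_neg_rule (Rule_occ a Ht) Nn) => b' [<-|]. Qed.

Lemma closed_nocc t a b : t <= n -> a != b -> T (Occ F b t) -> T (Nocc F a t).
Proof. by move=> Ht Hab Ho; apply: (closed_pos_rule (Rule_nocc Ht Hab)) => b' [<-|]. Qed.

Lemma closed_inertia t l : t < n ->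
  ~ M (Holds A (compl l) t.+1) -> T (Holds A l t) -> T (Holds A l t.+1).
Proof. by move=> Ht Nc Hl; apply: (closed_neg_rule (Rule_inertia l Ht) Nc) => b' [<-|]. Qed.

Lemma closed_goal : (forall p, p \in Delta -> T (Holds A p n)) -> T Goal.
Proof. by move=> HD; apply: (closed_pos_rule Rule_goal (hs_closed HD)). Qed.

End ReductClosure.

End Program.

Section AnswerSetToPlan.
Variables (F A : finType) (D : domain F A) (Gamma : {set lit F}) (Delta : seq (lit F)).
Variables (n : nat) (M : atom F A -> Prop).
Hypothesis HM : answer_set (Pi_n D Gamma Delta n) M.

Let M_closed : closed_reduct (Pi_n D Gamma Delta n) M M.
Proof. by case: HM. Qed.

Lemma M_supported x : M x -> exists pos neg,
  [/\ Pi_rule D Gamma Delta n (Some x, pos, neg),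
      forall c, List.In c neg -> ~ M c & forall b, List.In b pos -> M b].
Proof.
by case/(answer_set_supported HM) => pos [neg [[/Pi_rule_In Hr Hneg] Hb]]; exists pos, neg.
Qed.

Definition state_at t : {set lit F} := [set l | `[< M (Holds A l t) >]].

Lemma state_atP l t : reflect (M (Holds A l t)) (l \in state_at t).
Proof. by rewrite inE; apply: asboolP. Qed.

Lemma state_at_consistent t : t <= n -> consistent (state_at t).
Proof.
move=> Ht f [/state_atP Hpos /state_atP Hneg]; case: HM => _ _ Hcons.
apply: (Hcons _ [::]); first by split=> //; apply: In_Pi_rule; apply: Rule_consistency Ht.
by move=> b [<-|[<-|]].
Qed.

Lemma state_at_closed t : t <= n -> closed_DC D (state_at t).
Proof.
move=> Ht P l Hc HP; apply/state_atP.
by apply: (closed_static M_closed Ht Hc) => p /HP /state_atP.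
Qed.

Lemma state_at_complete_succ t :
  t < n -> complete (state_at t) -> complete (state_at t.+1).
Proof.
move=> Ht Hc f.
have inert l : l \in state_at t -> l \in state_at t.+1 \/ compl l \in state_at t.+1.
  move=> /state_atP Hl; have [Hcl|Ncl] := pselect (M (Holds A (compl l) t.+1)).
    by right; apply/state_atP.
  by left; apply/state_atP; exact: (closed_inertia M_closed Ht Ncl Hl).
by case: (Hc f) => /inert /= []; auto.
Qed.

Lemma state_at_succ t : t < n -> state D (state_at t) -> state D (state_at t.+1).
Proof.
move=> Ht [/interpretationP [_ Hc] _]; split; last exact: state_at_closed.
apply/interpretationP; split; first exact: state_at_consistent.
exact: state_at_complete_succ.
Qed.

Lemma occ_support a t :
  M (Occ F a t) -> [/\ t <= n, M (Possible F a t) & ~ M (Nocc F a t)].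
Proof.
case/M_supported=> pos [neg []]; move E: (Some (Occ F a t), pos, neg) => r Hr.
case: Hr E => // t' a' Ht [-> -> -> ->] Hneg Hb.
by split=> //; [apply: Hb; left | apply: Hneg; left].
Qed.

Lemma possible_support a t :
  M (Possible F a t) -> t <= n /\ executable D a (state_at t).
Proof.
case/M_supported=> pos [neg []]; move E: (Some (Possible F a t), pos, neg) => r Hr.
case: Hr E => // t' a' P Ht HP [-> -> -> _] _ Hb.
split=> //; exists P; split=> // p Hp; apply/state_atP; apply: Hb.
by apply/In_hs; exists p.
Qed.

Lemma executable_possible a t :
  t <= n -> executable D a (state_at t) -> M (Possible F a t).
Proof. by move=> Ht Hex; apply: (closed_possible M_closed Ht Hex) => l /state_atP. Qed.

Lemma occ_unique a b t : M (Occ F a t) -> M (Occ F b t) -> a = b.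
Proof.
move=> Ha Hb; case: (eqVneq a b) => // Hab; have [Ht _ []] := occ_support Ha.
exact: (closed_nocc M_closed Ht Hab Hb).
Qed.

Lemma possible_occurs a t : M (Possible F a t) -> exists b, M (Occ F b t).
Proof.
move=> Hp; have [//|Hnone] := pselect (exists b, M (Occ F b t)).
exists a; have [Ht _] := possible_support Hp.
apply: (closed_occ M_closed Ht _ Hp) => /M_supported [pos [neg []]].
move E: (Some (Nocc F a t), pos, neg) => r Hr.
case: Hr E => // t' a' b Ht' Hab [_ <- -> _] _ Hb.
by apply: Hnone; exists b; apply: Hb; left.
Qed.

Lemma occurs_iff_executable t : t <= n ->
  (exists a, M (Occ F a t)) <-> exists a, executable D a (state_at t).
Proof.
move=> Ht; split=> [[a /occ_support [_ /possible_support [_ Hex] _]]|[a Hex]].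
  by exists a.
exact: (possible_occurs (executable_possible Ht Hex)).
Qed.

Definition holds_outside t (w : {set lit F}) (x : atom F A) : Prop :=
  exists2 l, x = Holds A l t & l \notin w.

Lemma closed_DC_hs t (w : {set lit F}) P l :
  closed_DC D w -> (P, l) \in static_laws D ->
  (forall b, List.In b (hs A t P) -> M b /\ ~ holds_outside t w b) -> l \in w.
Proof.
move=> Hw Hc Hb; apply: (Hw _ _ Hc) => p Hp; apply: contrapT => /negP Np.
have /Hb [_ []] : List.In (Holds A p t) (hs A t P) by apply/In_hs; exists p.
by exists p.
Qed.

Lemma state_at_succ_least t (w : {set lit F}) : t < n -> closed_DC D w ->
  state_at t :&: state_at t.+1 \subset w ->
  (forall a, M (Occ F a t) -> E D a (state_at t) \subset w) ->
  state_at t.+1 \subset w.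
Proof.
move=> Ht Hw Hinert Heff; apply/subsetP => l /state_atP Ml.
apply: contrapT => /negP Nl.
apply: (answer_set_unfounded HM (R := holds_outside t.+1 w) _ Ml); last by exists l.
move=> h pos neg [/Pi_rule_In Hr Hneg] Hb [l' Eh Nl']; subst h; move: Hr Hneg Hb Nl'.
move E: (Some (Holds A l' t.+1), pos, neg) => r Hr.
case: Hr E => // [t0 a l0 P _ Hd|t0 P l0 _ Hc|t0 l0 _] [-> <- -> _] Hneg Hb /negP; apply.
- have [Ho _] := Hb (Occ F a t) (or_introl erefl).
  apply: (subsetP (Heff a Ho)); rewrite inE; apply/hasP.
  exists (a, l0, P); rewrite //= !eqxx; apply/allP => p Hp; apply/state_atP.
  by apply: (proj1 (Hb _ _)); do 2 right; apply/In_hs; exists p.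
- exact: (closed_DC_hs Hw Hc Hb).
- have [Hl _] := Hb (Holds A l0 t) (or_introl erefl).
  apply: (subsetP Hinert); rewrite inE; apply/andP; split; apply/state_atP => //.
  exact: (closed_inertia M_closed Ht (Hneg _ (or_introl erefl)) Hl).
Qed.

Lemma state_at_Phi t a : t < n -> state D (state_at t) -> M (Occ F a t) ->
  Phi D a (state_at t) (state_at t.+1).
Proof.
move=> Ht Hs Ho; have [_ Hp _] := occ_support Ho; have [_ Hex] := possible_support Hp.
have HE : E D a (state_at t) \subset state_at t.+1.
  apply/subsetP => l Hl; apply/state_atP.
  by apply: (closed_effect M_closed Ht Hl Ho Hp) => p /state_atP.
split=> //; split; first exact: state_at_succ.
split; [exact: state_at_consistent | by rewrite subUset HE subsetIr |
        exact: state_at_closed |].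
move=> w _ Hw Hcl; apply: state_at_succ_least => //.
  by apply: subset_trans Hw; rewrite subsetUr.
by move=> b /(occ_unique Ho) <-; apply: subset_trans Hw; rewrite subsetUl.
Qed.

Lemma state_at_frame t : t < n -> state D (state_at t) ->
  (forall a, ~ M (Occ F a t)) -> state_at t.+1 = state_at t.
Proof.
move=> Ht Hs Hnone; have [[_ Hmax] _] := state_at_succ Ht Hs.
apply/esym/Hmax; first by case: Hs => -[].
by apply: state_at_succ_least => //; [case: Hs | exact: subsetIl | move=> a /Hnone].
Qed.

Lemma state_at0 : closed_DC D Gamma -> state_at 0 = Gamma.
Proof.
move=> HG; apply/eqP; rewrite eqEsubset; apply/andP; split; last first.
  by apply/subsetP => l Hl; apply/state_atP; apply: (closed_init M_closed Hl).
apply/subsetP => l /state_atP Ml; apply: contrapT => /negP Nl.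
apply: (answer_set_unfounded HM (R := holds_outside 0 Gamma) _ Ml); last by exists l.
move=> h pos neg [/Pi_rule_In Hr _] Hb [l' Eh Nl']; subst h; move: Hr Hb Nl'.
move E: (Some (Holds A l' 0), pos, neg) => r Hr.
case: Hr E => // [l0 Hl0 [-> _ _] _|t0 P l0 _ Hc [-> <- -> _] Hb] /negP; apply => //.
exact: (closed_DC_hs HG Hc Hb).
Qed.

Lemma answer_set_goal : {subset Delta <= state_at n}.
Proof.
have MGoal : M Goal.
  apply: contrapT => NGoal; case: HM => _ _ Hcons.
  apply: (Hcons [::] [:: Goal]) => //; split.
    by apply: In_Pi_rule; apply: Rule_goal_constraint.
  by move=> c [<-|].
case/M_supported: MGoal => pos [neg []]; move E: (Some Goal, pos, neg) => r Hr.
case: Hr E => // -[-> _] _ Hb p Hp; apply/state_atP; apply: Hb.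
by apply/In_hs; exists p.
Qed.

Lemma answer_set_prefix j : state D Gamma -> j <= n ->
  exists acts, [/\ size acts <= j,
    forall i a, onth acts i = Some a -> M (Occ F a i),
    reach D Gamma acts (state_at (size acts)),
    state_at j = state_at (size acts) &
    size acts < j -> forall a, ~ executable D a (state_at (size acts))].
Proof.
move=> HG; elim: j => [_|j IH Hj].
  exists [::]; split=> // [i a|]; first by rewrite onth0n.
  by rewrite /= state_at0 //; case: HG.
have Hjn : j < n := Hj.
have [acts [Hkj Hocc Hr Ejk Hstuck]] := IH (ltnW Hj).
have Hsj : state D (state_at j) by rewrite Ejk; apply: reach_state HG Hr.
have [[b Hb]|Hnone] := pselect (exists b, M (Occ F b j)).
- have Ekj : size acts = j.
    apply/eqP; rewrite eqn_leq Hkj leqNgt; apply/negP => Hkj'.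
    have [a Hex] := (occurs_iff_executable (ltnW Hjn)).1 (ex_intro _ b Hb).
    by apply: (Hstuck Hkj' a); rewrite -Ejk.
  exists (rcons acts b); rewrite size_rcons Ekj; split=> //.
  + move=> i a; rewrite -cats1 onth_cat Ekj; case: ltnP => [_ /Hocc //|Hji].
    by case/onth1P => Ei <-; rewrite -(subnK Hji) Ei.
  + by apply/reach_rcons; exists (state_at j); [rewrite -Ekj | apply: state_at_Phi].
  + by rewrite ltnn.
- have Hframe : state_at j.+1 = state_at j.
    by apply: state_at_frame => // a Ha; apply: Hnone; exists a.
  exists acts; split=> //; first exact: leqW.
    by rewrite Hframe.
  move=> _ a Hex; apply: Hnone.
  by apply/(occurs_iff_executable (ltnW Hjn)); exists a; rewrite Ejk.
Qed.

Lemma answer_set_plan : state D Gamma -> deterministic D ->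
  exists k : nat, k <= n /\
    exists acts : seq A,
      [/\ size acts = k,
          (forall (i : nat) (a : A), onth acts i = Some a -> M (Occ F a i)),
          (forall (i : nat) (a b : A), onth acts i = Some a -> M (Occ F b i) -> b = a),
          is_plan D Gamma Delta acts &
          (k < n -> forall s : {set lit F}, trajectory_from D Gamma acts s ->
             forall a : A, ~ executable D a s)].
Proof.
move=> HG Hdet.
have [acts [Hkn Hocc Hr Enk Hstuck]] := answer_set_prefix HG (leqnn n).
exists (size acts); split=> //; exists acts; split=> //.
- by move=> i a b /Hocc Ha Hb; apply/esym/(occ_unique Ha Hb).
- by exists (state_at (size acts)); split; [|rewrite -Enk; apply: answer_set_goal].
- by move=> Hk s [_ Hs] a; rewrite (reach_det Hdet HG Hs Hr); apply: Hstuck.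
Qed.

End AnswerSetToPlan.

Section PlanToAnswerSet.
Variables (F A : finType) (D : domain F A) (Gamma : {set lit F}) (Delta : seq (lit F)).
Variables (acts : seq A) (sN : {set lit F}).
Hypotheses (HG : state D Gamma) (Hdet : deterministic D).
Hypotheses (Hr : reach D Gamma acts sN) (HDelta : models sN Delta).
Local Notation n := (size acts).
Local Notation st t s := (reach D Gamma (take t acts) s).

Lemma st_exists t : exists s, st t s.
Proof.
by move: Hr; rewrite -{1}(cat_take_drop t acts) => /reach_cat [s Hs _]; exists s.
Qed.

Lemma st_state t s : st t s -> state D s.
Proof. exact: reach_state HG. Qed.

Lemma st_unique t s1 s2 : st t s1 -> st t s2 -> s1 = s2.
Proof. exact: reach_det Hdet HG. Qed.

Lemma st_last : st n sN.
Proof. by rewrite take_size. Qed.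

(* Rule (5) is also instantiated at t = n, so the answer set has to let some
   action executable in the final state occur there, if there is one. *)
Definition chosen t : option A :=
  if t == n then [pick a | `[< executable D a sN >]] else onth acts t.

Lemma chosen_lt t : t < n -> chosen t = onth acts t.
Proof. by move=> Ht; rewrite /chosen ltn_eqF. Qed.

Lemma chosen_total t : t < n -> exists a, chosen t = Some a.
Proof.
move=> Ht; rewrite chosen_lt //; case E: (onth acts t) => [a|]; first by exists a.
by move: (onthTE acts t); rewrite E Ht.
Qed.

Lemma chosen_step t a s s' :
  t < n -> chosen t = Some a -> st t s -> st t.+1 s' -> Phi D a s s'.
Proof.
move=> Ht; rewrite chosen_lt // => Ha Hs.
rewrite (take_nth a Ht) (onth_nth a _ _ _ Ha) => /reach_rcons [m Hm HP].
by rewrite (st_unique Hs Hm).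
Qed.

Lemma chosen_executable t a :
  chosen t = Some a -> t <= n /\ exists2 s, st t s & executable D a s.
Proof.
have [Ht|Hnt] := ltnP t n.
  move=> Ha; have [s Hs] := st_exists t; have [s' Hs'] := st_exists t.+1.
  by split; [exact: ltnW | exists s => //; case: (chosen_step Ht Ha Hs Hs')].
rewrite /chosen; case: eqP => [->|Hne]; last by rewrite onth_default.
by case: pickP => // b /asboolP Hb [<-]; split=> //; exists sN; first exact: st_last.
Qed.

Lemma chosen_last_none : chosen n = None -> forall a, ~ executable D a sN.
Proof. by rewrite /chosen eqxx; case: pickP => // Hnone _ a /asboolP; rewrite Hnone. Qed.

Definition plan_model (x : atom F A) : Prop :=
  match x with
  | Holds l t => t <= n /\ exists2 s, st t s & l \in s
  | Possible a t => t <= n /\ exists2 s, st t s & executable D a s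
  | Occ a t => chosen t = Some a
  | Nocc a t => t <= n /\ exists2 b, b != a & chosen t = Some b
  | Goal => True
  end.
Local Notation M := plan_model.

Lemma plan_model_holds t s l : st t s -> M (Holds A l t) -> l \in s.
Proof. by move=> Hs [_ [s' Hs' Hl]]; rewrite (st_unique Hs Hs'). Qed.

Lemma plan_model_hs t s P :
  st t s -> (forall b, List.In b (hs A t P) -> M b) -> {subset P <= s}.
Proof.
by move=> Hs HP p Hp; apply: (plan_model_holds Hs); apply: HP; apply/In_hs; exists p.
Qed.

Lemma plan_model_occ t a :
  t <= n -> ~ M (Nocc F a t) -> M (Possible F a t) -> M (Occ F a t).
Proof.
move=> Ht Nn [_ [s Hs Hex]].
have [b Hb] : exists b, chosen t = Some b.
  have [/chosen_total //|Hnt] := ltnP t n.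
  have Etn : t = n by apply/eqP; rewrite eqn_leq Ht.
  case E: (chosen t) => [b|]; first by exists b.
  by subst t; case: (chosen_last_none E (a := a)); rewrite (st_unique st_last Hs).
case: (eqVneq b a) => [<- //|Hba].
by case: Nn; split=> //; exists b.
Qed.

(* [oapp M False] treats both kinds of rules: a rule with head h must put h in M,
   and a constraint must have an unsatisfied body. *)
Lemma plan_model_rule r : Pi_rule D Gamma Delta n r ->
  (forall c, List.In c r.2 -> ~ M c) -> (forall b, List.In b r.1.2 -> M b) ->
  oapp M False r.1.1.
Proof.
case=> /= [l Hl|t a P Ht HP|t a l P Ht Hd|t P l Ht Hc|t a Ht|t a b Ht Hab|t l Ht|
           t f Ht||] Hneg Hb.
- by split=> //; exists Gamma; rewrite ?take0.
- have [s Hs] := st_exists t; split=> //; exists s => //.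
  by exists P; split=> //; apply: (plan_model_hs Hs Hb).
- have [s Hs] := st_exists t; have [s' Hs'] := st_exists t.+1.
  have Ha : chosen t = Some a by apply: (Hb (Occ F a t)); left.
  have [_ [_ [_ HE _ _]]] := chosen_step Ht Ha Hs Hs'.
  split=> //; exists s' => //; apply: (subsetP HE); rewrite !inE; apply/orP; left.
  apply/hasP; exists (a, l, P); rewrite //= !eqxx /=; apply/allP.
  by apply: (plan_model_hs Hs) => b' Hb'; apply: Hb; do 2 right.
- have [s Hs] := st_exists t; split=> //; exists s => //.
  exact: (st_state Hs).2 _ _ Hc (plan_model_hs Hs Hb).
- exact: (plan_model_occ Ht (Hneg _ (or_introl erefl)) (Hb _ (or_introl erefl))).
- have Hob : chosen t = Some b by apply: (Hb (Occ F b t)); left.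
  by split=> //; exists b; rewrite // eq_sym.
- have [s Hs] := st_exists t; have [s' Hs'] := st_exists t.+1.
  have Hl : l \in s by apply: (plan_model_holds Hs (Hb _ (or_introl erefl))).
  split=> //; exists s' => //.
  have [_ Hcomplete] := (interpretationP s').1 (st_state Hs').1.
  case: (complete_compl l Hcomplete) => // Hcl; case: (Hneg _ (or_introl erefl)).
  by split=> //; exists s'.
- have [s Hs] := st_exists t; have [[Hcons _] _] := st_state Hs.
  by apply: (Hcons f); split; apply: (plan_model_holds Hs (Hb _ _)); auto.
- by [].
- exact: (Hneg Goal (or_introl erefl) I).
Qed.

Section Minimality.
Variable T : atom F A -> Prop.
Hypothesis HT : closed_reduct (Pi_n D Gamma Delta n) M T.

Lemma occ_least t a s : chosen t = Some a -> st t s ->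
  (forall l, l \in s -> T (Holds A l t)) -> T (Occ F a t).
Proof.
move=> Ha Hs Hholds; have [Ht [s' Hs' Hex]] := chosen_executable Ha.
rewrite -(st_unique Hs Hs') in Hex.
apply: (closed_occ HT Ht); last exact: (closed_possible HT Ht Hex Hholds).
by case=> _ [b]; rewrite Ha => + [Eab]; rewrite Eab eqxx.
Qed.

(* s_(t+1) is the least closed set containing the effects and the inertial
   literals, and the literals l of s_(t+1) with holds(l, t+1) in T form such a set. *)
Lemma holds_least t s : t <= n -> st t s -> forall l, l \in s -> T (Holds A l t).
Proof.
elim: t s => [|t IH] s' Ht Hs'.
  by move: Hs'; rewrite take0 => -> l; apply: (closed_init HT).
have [s Hs] := st_exists t; have [a Ha] := chosen_total Ht.
have [Hex [_ [Hcons Hsub Hcl Hleast]]] := chosen_step Ht Ha Hs Hs'.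
have IHs := IH s (ltnW Ht) Hs.
pose W := [set l in s' | `[< T (Holds A l t.+1) >]].
suff /subsetP HW : s' \subset W by move=> l /HW; rewrite inE => /andP [_ /asboolP].
apply: Hleast.
- by move=> f; rewrite !inE => -[/andP [Hft _] /andP [Hff _]]; apply: (Hcons f).
- apply/subsetP => l Hl; rewrite inE (subsetP Hsub l Hl); apply/asboolP.
  case/setUP: Hl => [He|/setIP [Hls Hls']].
    apply: (closed_effect HT Ht He) => //; first exact: (occ_least Ha Hs IHs).
    exact: (closed_possible HT (ltnW Ht) Hex IHs).
  apply: (closed_inertia HT Ht) (IHs _ Hls) => /(plan_model_holds Hs') Hcl'.
  exact: (consistent_compl Hcons Hls' Hcl').
- move=> P l HPl HPW; rewrite inE (Hcl P l HPl) => [|p /HPW]; last by rewrite inE => /andP [].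
  apply/asboolP; apply: (closed_static HT Ht HPl) => p /HPW.
  by rewrite inE => /andP [_ /asboolP].
Qed.

Lemma plan_model_least x : M x -> T x.
Proof.
case: x => [l t|a t|a t|a t|] /=.
- by case=> Ht [s Hs Hl]; apply: (holds_least Ht Hs).
- by case=> Ht [s Hs Hex]; apply: (closed_possible HT Ht Hex (holds_least Ht Hs)).
- move=> Ha; have [Ht [s Hs _]] := chosen_executable Ha.
  exact: (occ_least Ha Hs (holds_least Ht Hs)).
- case=> Ht [b Hba Hb]; apply: (closed_nocc HT Ht (b := b)); first by rewrite eq_sym.
  have [_ [s Hs _]] := chosen_executable Hb.
  exact: (occ_least Hb Hs (holds_least Ht Hs)).
- by move=> _; apply: (closed_goal HT) => p /HDelta; apply: (holds_least (leqnn n) st_last).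
Qed.

End Minimality.

Lemma plan_model_answer_set : answer_set (Pi_n D Gamma Delta n) M.
Proof.
split.
- by move=> h pos neg [/Pi_rule_In Hrule Hneg] Hb; apply: (plan_model_rule Hrule Hneg Hb).
- by move=> T HT x; apply: plan_model_least.
- by move=> pos neg [/Pi_rule_In Hrule Hneg] Hb; apply: (plan_model_rule Hrule Hneg Hb).
Qed.

Lemma plan_model_occ_plan i a : onth acts i = Some a -> M (Occ F a i).
Proof. by move=> Ha; rewrite /= chosen_lt // -onthTE Ha. Qed.

End PlanToAnswerSet.

Unset Implicit Arguments.

Theorem corollary1 (F A : finType) (D : domain F A) (Gamma : {set F * bool})
    (Delta : seq (F * bool)) (n : nat) :
  problem_consistent D Gamma -> deterministic D ->
  (forall acts : seq A, size acts = n -> is_plan D Gamma Delta acts ->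
     exists M : atom F A -> Prop,
       answer_set (Pi_n D Gamma Delta n) M /\
       (forall (i : nat) (a : A), onth acts i = Some a -> M (Occ F a i))) /\
  (forall M : atom F A -> Prop, answer_set (Pi_n D Gamma Delta n) M ->
     exists k : nat, k <= n /\
       exists acts : seq A,
         [/\ size acts = k,
             (forall (i : nat) (a : A), onth acts i = Some a -> M (Occ F a i)),
             (forall (i : nat) (a b : A), onth acts i = Some a -> M (Occ F b i) -> b = a),
             is_plan D Gamma Delta acts &
             (k < n -> forall s : {set F * bool}, trajectory_from D Gamma acts s ->
                forall a : A, ~ executable D a s)]).
Proof.
move=> [_ HG] Hdet; split=> [acts <- [sN [[_ Hr] HDelta]]|M HM].
  exists (plan_model D Gamma acts sN); split; first exact: plan_model_answer_set.
  exact: plan_model_occ_plan.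
exact: answer_set_plan.
Qed.
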